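(* Let $S_0,\dots,S_{k-1}$ be martingales on $2^{<\omega}$ and let $c>\max_{j<k}S_j(\bot)+\frac12\sum_{j<k}\sqrt{\mathrm{Var}(S_j\mid\bot)}$. Then there exists a martingale $S^*$ with $S^*(\bot)<c$ such that $S^*(\rho)>\max_{j<k}S_j(\rho)$ for all $\rho\in2^{<\omega}$. Moreover, $S^*$ can be taken bounded if each $S_j$ is bounded.
   Context: A martingale is a function $S:2^{<\omega}\to\mathbb{R}^{\ge0}$ with $2S(\rho)=S(\rho0)+S(\rho1)$ for all $\rho$; $\bot$ is the empty string. For a martingale $S$ and $\rho\in2^{<\omega}$, $\mathrm{Var}(S\mid\rho)=\lim_{t\to\infty}2^{-(t-|\rho|)}\sum_{\sigma\in 2^t,\ \sigma\succeq\rho}(S(\sigma)-S(\rho))^2$. A function is bounded if its range is a bounded subset of $\mathbb{R}$. *)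

From HB Require Import structures.
From mathcomp Require Import all_boot all_order all_algebra.
From mathcomp Require Import all_classical all_reals all_analysis.
Set Implicit Arguments. Unset Strict Implicit. Unset Printing Implicit Defensive.
Import Order.TTheory GRing.Theory Num.Theory numFieldNormedType.Exports.
Local Open Scope ring_scope.

(* Binary strings 2^{<omega} are [seq bool]; the empty string (bot) is [::];
   the extension rho0 / rho1 is [rcons rho false] / [rcons rho true]. *)

Definition martingale {R : realType} (S : seq bool -> R) : Prop :=
  forall rho : seq bool,
    0 <= S rho /\ 2 * S rho = S (rcons rho false) + S (rcons rho true).

Definition var_approx {R : realType} (S : seq bool -> R) (rho : seq bool)
  (t : nat) : R :=
  (2 ^+ (t - size rho))^-1 *
  \sum_(s : t.-tuple bool | prefix rho s) (S s - S rho) ^+ 2.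

(* Var(S | rho) = lim_{t -> oo} var_approx S rho t  (meaningful when the limit
   exists as a real number). *)
Definition Var {R : realType} (S : seq bool -> R) (rho : seq bool) : R :=
  limn (var_approx S rho).

From HB Require Import structures.
From mathcomp Require Import all_boot all_order all_algebra.
From mathcomp Require Import all_classical all_reals all_analysis.
From mathcomp Require Import ring lra.
Set Implicit Arguments. Unset Strict Implicit. Unset Printing Implicit Defensive.
Import Order.TTheory GRing.Theory Num.Theory numFieldNormedType.Exports.
Local Open Scope ring_scope.

(* The pointwise maximum m of the S_j is a nonnegative submartingale lying below
   the martingale sum_j S_j, so its averages over the extensions of rho of length n
   increase with n towards a martingale M with m <= M <= sum_j S_j.  At the root,
   max_j S_j(s) <= m(bot) + sum_j (S_j(s) - S_j(bot))^+; the increment S_j(s) - S_j(bot)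
   has mean zero over the strings of length n, so its positive part has mean half
   its mean absolute value, which is at most half the square root of the n-th
   variance approximation.  Hence M(bot) <= m(bot) + 1/2 sum_j sqrt(Var(S_j | bot)) < c,
   and S* = M + eps works for a small eps > 0. *)

Section Mean.
Variables (R : realFieldType) (I : finType).
Implicit Types (F G : I -> R) (a : R).

Definition mean F : R := (#|I|%:R)^-1 * \sum_i F i.

Lemma mean_cst a : (0 < #|I|)%N -> mean (fun=> a) = a.
Proof.
move=> I_gt0; rewrite /mean sumr_const -[a *+ _]mulr_natl mulrA mulVf ?mul1r //.
by rewrite pnatr_eq0 -lt0n.
Qed.

Lemma meanD F G : mean (fun i => F i + G i) = mean F + mean G.
Proof. by rewrite /mean big_split mulrDr. Qed.

Lemma meanB F G : mean (fun i => F i - G i) = mean F - mean G.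
Proof. by rewrite /mean sumrB mulrBr. Qed.

Lemma meanZ a F : mean (fun i => a * F i) = a * mean F.
Proof. by rewrite /mean -mulr_sumr mulrCA. Qed.

Lemma mean_sum (J : finType) (F : J -> I -> R) :
  mean (fun i => \sum_j F j i) = \sum_j mean (F j).
Proof. by rewrite /mean exchange_big mulr_sumr. Qed.

Lemma mean_ge0 F : (forall i, 0 <= F i) -> 0 <= mean F.
Proof. by move=> F_ge0; rewrite mulr_ge0 ?invr_ge0 ?sumr_ge0. Qed.

Lemma ler_mean F G : (forall i, F i <= G i) -> mean F <= mean G.
Proof. by move=> FG; rewrite ler_wpM2l ?invr_ge0 // ler_sum. Qed.

End Mean.

Lemma mean_abs_le_sqrt (R : rcfType) (I : finType) (F : I -> R) :
  mean (fun i => `|F i|) <= Num.sqrt (mean (fun i => F i ^+ 2)).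
Proof.
have [I0|I_gt0] := posnP #|I|.
  by rewrite /mean I0 invr0 mul0r sqrtr_ge0.
set mu := mean _.
have mu_ge0 : 0 <= mu by apply: mean_ge0.
have devE : mean (fun i => (`|F i| - mu) ^+ 2) = mean (fun i => F i ^+ 2) - mu ^+ 2.
  (* [ring] does not recognise the ring structure of [`|F i|] as elaborated
     under [mean], hence this identity on fresh variables and the [clearbody]. *)
  have sqr_dev (a m : R) : (a - m) ^+ 2 = a ^+ 2 - 2 * m * a + m ^+ 2 by ring.
  transitivity (mean (fun i => F i ^+ 2 - (2 * mu) * `|F i| + mu ^+ 2)).
    by congr (mean _); apply/funext => i; rewrite sqr_dev real_normK ?num_real.
  by rewrite meanD meanB meanZ mean_cst // -/mu; clearbody mu; ring.
have mu2_le : mu ^+ 2 <= mean (fun i => F i ^+ 2).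
  by rewrite -subr_ge0 -devE; apply: mean_ge0 => i; apply: sqr_ge0.
rewrite -(ger0_norm mu_ge0) -sqrtr_sqr ler_sqrt //.
exact: le_trans (sqr_ge0 mu) mu2_le.
Qed.

Lemma bigmax_le_add_sum_max0 (R : realDomainType) (I : finType) (a b : I -> R) :
  \big[Num.max/0]_i a i <= \big[Num.max/0]_i b i + \sum_i Num.max (a i - b i) 0.
Proof.
have max0_ge0 i : 0 <= Num.max (a i - b i) 0 by rewrite le_max lexx orbT.
apply: bigmax_le => [|i _]; first by rewrite addr_ge0 ?bigmax_ge_id ?sumr_ge0.
have a_le : a i <= b i + Num.max (a i - b i) 0.
  by rewrite -lerBlDl le_max lexx.
apply: (le_trans a_le); apply: lerD; first exact: le_bigmax.
by rewrite (bigD1 i) //= lerDl sumr_ge0.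
Qed.

Lemma bounded_fun_sum (T : Type) (R : realFieldType) (I : finType) (F : I -> T -> R) :
  (forall i, bounded_fun (F i)) -> bounded_fun (fun x => \sum_i F i x).
Proof.
move=> F_bd; rewrite -fct_sumE.
by apply: big_ind => //; [exact: bounded_cst | exact: bounded_funD].
Qed.

Lemma bounded_fun_le (T : Type) (R : realFieldType) (f g : T -> R) :
  (forall x, 0 <= f x <= g x) -> bounded_fun g -> bounded_fun f.
Proof.
move=> fg; apply: sub_boundedl => x _; have /andP[f_ge0 f_le] := fg x.
by rewrite !ger0_norm // (le_trans f_ge0).
Qed.

Lemma big_tuple0 (V : nmodType) (T : finType) (h : seq T -> V) :
  \sum_(s : 0.-tuple T) h s = h [::].
Proof. by rewrite (big_pred1 [tuple]) // => s; apply/esym/eqP/tuple0. Qed.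

Lemma big_tupleS (V : nmodType) (T : finType) n (h : seq T -> V) :
  \sum_(s : n.+1.-tuple T) h s = \sum_(x : T) \sum_(s : n.-tuple T) h (x :: s).
Proof.
rewrite pair_big (reindex (fun p : T * n.-tuple T => [tuple of p.1 :: p.2])) //=.
exists (fun s : n.+1.-tuple T => (thead s, [tuple of behead s])).
  by move=> [x s] _; congr pair; apply: val_inj.
move=> s _; apply: val_inj => /=.
by case: s => -[|x s] //= _; rewrite /thead (tnth_nth x).
Qed.

Section ExtensionMean.
Variable R : realFieldType.
Implicit Types (g : seq bool -> R) (rho : seq bool).

Definition ext_mean g rho n : R := mean (fun s : n.-tuple bool => g (rho ++ s)).

Definition submartingale g :=
  forall rho, 2 * g rho <= g (rcons rho false) + g (rcons rho true).

Lemma card_bool_tuple n : #|{: n.-tuple bool}|%:R = 2 ^+ n :> R.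
Proof. by rewrite card_tuple card_bool natrX. Qed.

Lemma ext_mean0 g rho : ext_mean g rho 0 = g rho.
Proof.
rewrite /ext_mean /mean card_bool_tuple (big_tuple0 (fun s => g (rho ++ s))).
by rewrite cats0 expr0 invr1 mul1r.
Qed.

Lemma ext_meanS g rho n : ext_mean g rho n.+1 =
  (ext_mean g (rcons rho false) n + ext_mean g (rcons rho true) n) / 2.
Proof.
rewrite /ext_mean /mean !card_bool_tuple (big_tupleS n (fun s => g (rho ++ s))).
rewrite big_bool /=.
under eq_bigr do rewrite -cat_rcons.
under [X in _ * (_ + X)]eq_bigr do rewrite -cat_rcons.
by rewrite exprS invfM; ring.
Qed.

Lemma ext_mean_nondecreasing g rho :
  submartingale g -> nondecreasing_seq (ext_mean g rho).
Proof.
move=> g_sub; apply/nondecreasing_seqP => n; elim: n rho => [|n IHn] rho.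
  by rewrite ext_meanS !ext_mean0 ler_pdivlMr // mulrC g_sub.
rewrite ext_meanS [ext_mean g rho n.+2]ext_meanS ler_pM2r // lerD //; exact: IHn.
Qed.

End ExtensionMean.

Lemma ext_mean_martingale (R : realType) (S : seq bool -> R) :
  martingale S -> forall n rho, ext_mean S rho n = S rho.
Proof.
move=> S_mart; elim=> [|n IHn] rho; first exact: ext_mean0.
rewrite ext_meanS !IHn; have [_ <-] := S_mart rho.
by rewrite mulrAC divff ?mul1r ?pnatr_eq0.
Qed.

Lemma martingaleD_cst (R : realType) (S : seq bool -> R) (e : R) :
  martingale S -> 0 <= e -> martingale (fun rho => S rho + e).
Proof.
move=> S_mart e_ge0 rho; have [S_ge0 S_eq] := S_mart rho.
by split; [rewrite addr_ge0 | lra].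
Qed.

Section MartingaleMajorant.
Variables (R : realType) (g B : seq bool -> R).
Hypotheses (g_sub : submartingale g) (g_ge0 : forall rho, 0 <= g rho).
Hypotheses (B_mart : martingale B) (g_le_B : forall rho, g rho <= B rho).

Definition martingale_majorant rho := limn (ext_mean g rho).

Lemma ext_mean_le_bound n rho : ext_mean g rho n <= B rho.
Proof. by rewrite -(ext_mean_martingale B_mart n rho); apply: ler_mean. Qed.

Lemma is_cvg_ext_mean rho : cvgn (ext_mean g rho).
Proof.
apply: nondecreasing_is_cvgn; first exact: ext_mean_nondecreasing.
by exists (B rho) => _ [n _ <-]; apply: ext_mean_le_bound.
Qed.

Lemma ext_mean_le_majorant n rho : ext_mean g rho n <= martingale_majorant rho.
Proof.
by apply: nondecreasing_cvgn_le; [exact: ext_mean_nondecreasing | exact: is_cvg_ext_mean].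
Qed.

Lemma le_majorant rho : g rho <= martingale_majorant rho.
Proof. by rewrite -(ext_mean0 g rho) ext_mean_le_majorant. Qed.

Lemma majorant_le_bound rho : martingale_majorant rho <= B rho.
Proof.
by apply: limr_le; [exact: is_cvg_ext_mean | apply: nearW => n; apply: ext_mean_le_bound].
Qed.

Lemma majorant_le_lim rho (u : R ^nat) :
  cvgn u -> (forall n, ext_mean g rho n <= u n) -> martingale_majorant rho <= limn u.
Proof.
move=> u_cvg le_u.
by apply: ler_lim; [exact: is_cvg_ext_mean | exact: u_cvg | exact: nearW].
Qed.

Lemma majorant_martingale : martingale martingale_majorant.
Proof.
move=> rho; split; first exact: le_trans (g_ge0 rho) (le_majorant rho).
have -> : martingale_majorant rho =
    (martingale_majorant (rcons rho false) + martingale_majorant (rcons rho true)) / 2.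
  apply: (cvg_lim (@Rhausdorff R)); rewrite -cvg_shiftS /=.
  under eq_fun do rewrite ext_meanS.
  by apply: cvgMr_tmp; apply: cvgD; apply: is_cvg_ext_mean.
by rewrite mulrC divfK ?pnatr_eq0.
Qed.

End MartingaleMajorant.

Section MaxOfMartingales.
Variables (R : realType) (I : finType) (S : I -> seq bool -> R).
Hypothesis S_mart : forall i, martingale (S i).

Lemma martingale_sum : martingale (fun rho => \sum_i S i rho).
Proof.
move=> rho; split; first by apply: sumr_ge0 => i _; have [] := S_mart i rho.
rewrite mulr_sumr -big_split /=; apply: eq_bigr => i _.
by have [_ ->] := S_mart i rho.
Qed.

Lemma bigmax_submartingale : submartingale (fun rho => \big[Num.max/0]_i S i rho).
Proof.
move=> rho; rewrite mulrC -ler_pdivlMr //; apply: bigmax_le => [|i _].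
  by rewrite divr_ge0 // addr_ge0 // bigmax_ge_id.
have [_ S_eq] := S_mart i rho.
by rewrite ler_pdivlMr // mulrC S_eq lerD // le_bigmax.
Qed.

Lemma bigmax_le_sum rho : \big[Num.max/0]_i S i rho <= \sum_i S i rho.
Proof.
apply: bigmax_le => [|i _]; first by apply: sumr_ge0 => i _; have [] := S_mart i rho.
by rewrite (bigD1 i) //= lerDl; apply: sumr_ge0 => j _; have [] := S_mart j rho.
Qed.

End MaxOfMartingales.

Lemma var_approx_nil (R : realType) (S : seq bool -> R) n :
  var_approx S [::] n = ext_mean (fun s => (S s - S [::]) ^+ 2) [::] n.
Proof.
rewrite /var_approx /ext_mean /mean card_bool_tuple subn0.
by congr (_ * _); apply: eq_bigl => s; rewrite prefix0s.
Qed.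

Lemma ext_mean_bigmax_le (R : realType) (I : finType) (S : I -> seq bool -> R) n :
  (forall i, martingale (S i)) ->
  ext_mean (fun rho => \big[Num.max/0]_i S i rho) [::] n <=
  \big[Num.max/0]_i S i [::] + 2^-1 * \sum_i Num.sqrt (var_approx (S i) [::] n).
Proof.
move=> S_mart; set m0 := \big[Num.max/0]_i S i [::].
pose X i (s : seq bool) := S i s - S i [::].
have tuples_gt0 : (0 < #|{: n.-tuple bool}|)%N by rewrite card_tuple card_bool expn_gt0.
have mean_X i : ext_mean (X i) [::] n = 0.
  by rewrite /ext_mean meanB mean_cst // -/(ext_mean _ _ _) ext_mean_martingale ?subrr.
have mean_max0 i : ext_mean (fun s => Num.max (X i s) 0) [::] n =
    2^-1 * ext_mean (fun s => `|X i s|) [::] n.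
  have -> : (fun s => Num.max (X i s) 0) = (fun s => 2^-1 * (X i s + `|X i s|)).
    by apply/funext => s; rewrite maxr_absE subr0 addr0 mulrC.
  rewrite /ext_mean meanZ meanD.
  by rewrite -!/(ext_mean _ _ _) mean_X add0r.
apply: le_trans (_ : ext_mean (fun s => m0 + \sum_i Num.max (X i s) 0) [::] n <= _).
  by apply: ler_mean => s; apply: bigmax_le_add_sum_max0.
rewrite /ext_mean meanD mean_cst // mean_sum lerD2l mulr_sumr.
apply: ler_sum => i _; rewrite [mean _]mean_max0 ler_wpM2l // var_approx_nil.
exact: mean_abs_le_sqrt.
Qed.

Lemma cvg_sum_sqrt_var_approx (R : realType) (I : finType) (S : I -> seq bool -> R) rho :
  (forall i, cvgn (var_approx (S i) rho)) ->
  (\sum_i Num.sqrt (var_approx (S i) rho n) @[n --> \oo] -->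
   \sum_i Num.sqrt (Var (S i) rho))%classic.
Proof.
move=> var_cvg; apply: cvg_big => // [|i _]; first exact: add_continuous.
apply: (@continuous_cvg _ _ _ _ _ _ Num.sqrt); [exact: sqrt_continuous | exact: var_cvg].
Qed.

Lemma majorant_bigmax_root_le (R : realType) (I : finType) (S : I -> seq bool -> R) :
  (forall i, martingale (S i)) -> (forall i, cvgn (var_approx (S i) [::])) ->
  martingale_majorant (fun rho => \big[Num.max/0]_i S i rho) [::] <=
  \big[Num.max/0]_i S i [::] + 2^-1 * \sum_i Num.sqrt (Var (S i) [::]).
Proof.
move=> S_mart var_cvg; set m0 := \big[Num.max/0]_i S i [::].
have bound_cvg : (m0 + 2^-1 * \sum_i Num.sqrt (var_approx (S i) [::] n)
    @[n --> \oo] --> m0 + 2^-1 * \sum_i Num.sqrt (Var (S i) [::]))%classic.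
  by apply: cvgD; [exact: cvg_cst | apply: cvgMl_tmp; exact: cvg_sum_sqrt_var_approx].
rewrite -(cvg_lim (@Rhausdorff R) bound_cvg).
apply: (majorant_le_lim (bigmax_submartingale S_mart) (martingale_sum S_mart)).
- exact: bigmax_le_sum.
- exact: cvgP bound_cvg.
- by move=> n; apply: ext_mean_bigmax_le.
Qed.

Theorem lemma3p8 (R : realType) (k : nat) (S : 'I_k -> seq bool -> R) (c : R) :
  (forall j, martingale (S j)) ->
  (forall j, cvgn (var_approx (S j) [::])) ->
  \big[Num.max/0]_(j < k) S j [::] + 2^-1 * \sum_(j < k) Num.sqrt (Var (S j) [::]) < c ->
  exists Sstar : seq bool -> R,
    [/\ martingale Sstar,
        Sstar [::] < c,
        (forall rho, \big[Num.max/0]_(j < k) S j rho < Sstar rho) &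
        ((forall j, bounded_fun (S j)) -> bounded_fun Sstar)].
Proof.
move=> S_mart var_cvg lt_c.
pose m rho := \big[Num.max/0]_(j < k) S j rho.
pose M := martingale_majorant m.
have m_ge0 rho : 0 <= m rho by apply: bigmax_ge_id.
have m_sub := bigmax_submartingale S_mart.
have sum_mart := martingale_sum S_mart.
have m_le_sum := bigmax_le_sum S_mart.
have M_mart : martingale M := majorant_martingale m_sub m_ge0 sum_mart m_le_sum.
have m_le_M rho : m rho <= M rho := le_majorant m_sub sum_mart m_le_sum rho.
have M_le_sum rho : M rho <= \sum_j S j rho :=
  majorant_le_bound m_sub sum_mart m_le_sum rho.
have M_root : M [::] < c := le_lt_trans (majorant_bigmax_root_le S_mart var_cvg) lt_c.
pose eps := (c - M [::]) / 2.
have eps_gt0 : 0 < eps by rewrite divr_gt0 // subr_gt0.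
exists (fun rho => M rho + eps); split.
- exact: martingaleD_cst M_mart (ltW eps_gt0).
- by rewrite /eps; lra.
- by move=> rho; rewrite (le_lt_trans (m_le_M rho)) // ltrDl.
move=> S_bd; apply: (bounded_fun_le (g := fun rho => \sum_j S j rho + eps)).
  move=> rho; rewrite lerD2r M_le_sum andbT addr_ge0 ?(ltW eps_gt0) //.
  exact: le_trans (m_ge0 rho) (m_le_M rho).
by apply: bounded_funD (bounded_fun_sum S_bd) _; apply: bounded_cst.
Qed.
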